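(* Let $m,n$ be positive integers with $n$ odd, and let $a_k,b_k\in\mathbb{Z}$ for $k=0,1,\ldots,m$ with $a_0+b_0=0$. Then, for a variable $x$, $$\det\left[x+\tan\pi\frac{a_j+b_k}n\right]_{0\le j,k\le m}-\det\left[\tan\pi\frac{a_j+b_k}n\right]_{0\le j,k\le m}=x\det\left[\tan\pi\frac{a_j+b_k}n\right]_{1\le j,k\le m}\times\prod_{k=1}^m\left(\tan\pi\frac{a_k+b_0}n\times\tan\pi\frac{a_0+b_k}n\right).$$ *)

From HB Require Import structures.
From mathcomp Require Import all_boot all_order all_algebra.
From mathcomp Require Import all_classical all_reals all_analysis.
Set Implicit Arguments. Unset Strict Implicit. Unset Printing Implicit Defensive.
Import Order.TTheory GRing.Theory Num.Theory.
Local Open Scope ring_scope.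

Definition tan_pi_frac (R : realType) (n : nat) (t : int) : R :=
  tan (pi * (t%:~R / n%:R)).

From HB Require Import structures.
From mathcomp Require Import all_boot all_order all_algebra.
From mathcomp Require Import all_classical all_reals all_analysis.
From mathcomp Require Import ring.
Set Implicit Arguments. Unset Strict Implicit. Unset Printing Implicit Defensive.
Import Order.TTheory GRing.Theory Num.Theory.
Local Open Scope ring_scope.

(* Subtracting row 0 from every other row and column 0 from every other
   column does not change a determinant; applied to [x + M], it removes [x]
   everywhere except at the corner, so the difference of the two determinants
   is [x] times the corner cofactor, i.e. the determinant of the matrix with
   entries [M_jk - M_0k - M_j0 + M_00] (j, k >= 1).  Writing
   [t_jk = tan (pi (a_j + b_k) / n)], we have [t_00 = 0] and
   [(a_j + b_k) = (a_j + b_0) + (a_0 + b_k)], so the addition formula for the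
   tangent, in the form [tan (u + v) - tan u - tan v = tan u tan v tan (u + v)],
   turns these entries into [t_j0 t_jk t_0k]: the reduced matrix is
   [diag (t_j0) * (t_jk) * diag (t_0k)].  Oddness of [n] ensures that none of
   the cosines involved vanishes. *)

Section RowColumnReduction.
Variables (F : comPzRingType) (m : nat).

Definition sub_row0_mx : 'M[F]_m.+1 :=
  1%:M - (\col_i (i != 0)%:R) *m delta_mx 0 0.

Definition sub_rowcol0 (P : 'M[F]_m.+1) : 'M[F]_m.+1 :=
  sub_row0_mx *m P *m sub_row0_mx^T.

Lemma det_sub_row0_mx : \det sub_row0_mx = 1.
Proof.
have entryE i j : sub_row0_mx i j = (i == j)%:R - (i != 0)%:R * (j == 0)%:R.
  by rewrite !mxE big_ord1 !mxE.
rewrite det_trig; last first.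
  apply/is_trig_mxP => i j lt_ij; rewrite entryE.
  have -> : (i == j) = false by apply/negbTE; rewrite neq_ltn lt_ij.
  have -> : (j == 0) = false by apply: contraTF lt_ij => /eqP ->.
  by rewrite mulr0 subr0.
apply: big1 => i _; rewrite entryE eqxx.
by case: eqVneq; rewrite ?mulr0 ?mul0r subr0.
Qed.

Lemma det_sub_rowcol0 P : \det (sub_rowcol0 P) = \det P.
Proof. by rewrite !det_mulmx det_tr det_sub_row0_mx mul1r mulr1. Qed.

Lemma sub_rowcol0E P i j : sub_rowcol0 P i j =
  P i j - (i != 0)%:R * P 0 j - (j != 0)%:R * (P i 0 - (i != 0)%:R * P 0 0).
Proof.
rewrite /sub_rowcol0 /sub_row0_mx mulmxBl mul1mx -mulmxA -rowE.
rewrite linearB /= trmx1 trmx_mul trmx_delta mulmxBr mulmx1 mulmxA -colE.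
by rewrite !mxE !big_ord1 !mxE big_ord1 !mxE; ring.
Qed.

End RowColumnReduction.

Lemma det_add_delta (F : comPzRingType) n (A : 'M[F]_n) (i j : 'I_n) x :
  \det (A + x *: delta_mx i j) = \det A + x * cofactor A i j.
Proof.
rewrite !(expand_det_row _ i).
have cofE k : cofactor (A + x *: delta_mx i j) i k = cofactor A i k.
  rewrite /cofactor; congr (_ * \det _); apply/matrixP => r c.
  by rewrite !mxE eq_sym (negbTE (neq_lift i r)) mulr0 addr0.
under eq_bigr => k _ do rewrite cofE !mxE.
rewrite eqxx; under eq_bigr do rewrite mulrDl.
rewrite big_split /=; congr (_ + _).
rewrite (bigD1 j) //= eqxx mulr1 big1 ?addr0 // => k /negbTE ->.
by rewrite mulr0 mul0r.
Qed.

Lemma det_add_const_subr (F : comPzRingType) m (f : 'I_m.+1 -> 'I_m.+1 -> F) x :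
  \det (\matrix_(j, k) (x + f j k)) - \det (\matrix_(j, k) f j k) =
  x * \det (\matrix_(j < m, k < m) (f (lift 0 j) (lift 0 k) - f 0 (lift 0 k)
                                   - f (lift 0 j) 0 + f 0 0)).
Proof.
set M := \matrix_(j, k) f j k.
have reduceE : sub_rowcol0 (\matrix_(j, k) (x + f j k))
               = sub_rowcol0 M + x *: delta_mx 0 0.
  apply/matrixP => i j; rewrite [RHS]mxE !sub_rowcol0E !mxE.
  by case: (eqVneq i 0) => [->|_]; case: (eqVneq j 0) => [->|_] /=; ring.
rewrite -det_sub_rowcol0 reduceE det_add_delta -(det_sub_rowcol0 M).
rewrite addrAC subrr add0r.
rewrite /cofactor addn0 expr0 mul1r; congr (_ * \det _); apply/matrixP => j k.
by rewrite mxE [LHS]mxE sub_rowcol0E !mxE /=; ring.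
Qed.

Section TangentAtRationalMultiplesOfPi.
Variable R : realType.

Lemma cos_mulrn_odd_eq0 (y : R) k : cos y = 0 -> odd k -> cos (y *+ k) = 0.
Proof.
move=> cy0 k_odd; rewrite -[k]odd_double_half k_odd add1n.
elim: k./2 => [|j IH]; first by rewrite mulr1n.
have cos_sum_diff (u v : R) : cos (u + v) = 2 * cos u * cos v - cos (u - v).
  by rewrite !cosD cosN sinN; ring.
by rewrite doubleS mulrSr cos_sum_diff cy0 mulr0 sub0r mulrSr addrK IH oppr0.
Qed.

Lemma sin_pi_int (t : int) : sin (pi * t%:~R) = 0 :> R.
Proof.
have sin_pi_nat k : sin (pi *+ k) = 0 :> R.
  by elim: k => [|k IH]; rewrite ?mulr0n ?sin0 // mulrSr sinDpi IH oppr0.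
by case: t => k; rewrite ?NegzE ?mulrNz ?mulrN ?sinN mulr_natr sin_pi_nat ?oppr0.
Qed.

Lemma cos_pi_int_neq0 (t : int) : cos (pi * t%:~R) != 0 :> R.
Proof.
apply/eqP => c0; have := sin0cos1 (sin_pi_int t).
by rewrite c0 normr0 => /eqP; rewrite eq_sym oner_eq0.
Qed.

Lemma cos_pi_frac_neq0 n (t : int) :
  odd n -> cos (pi * (t%:~R / n%:R)) != 0 :> R.
Proof.
move=> n_odd; apply: contraNneq (cos_pi_int_neq0 t) => c0; apply/eqP.
have n_neq0 : n%:R != 0 :> R.
  by rewrite pnatr_eq0; apply: contraTneq n_odd => ->.
by rewrite -(cos_mulrn_odd_eq0 c0 n_odd) -[pi * _ *+ n]mulr_natr -mulrA divfK.
Qed.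

Lemma tanD_subr (u v : R) : cos u != 0 -> cos v != 0 -> cos (u + v) != 0 ->
  tan (u + v) - tan u - tan v = tan u * tan v * tan (u + v).
Proof.
move=> cu cv; rewrite /tan sinD cosD => cuv.
by field; rewrite cu cv cuv.
Qed.

Lemma tan_pi_fracD_subr n (s t : int) : odd n ->
  tan_pi_frac R n (s + t) - tan_pi_frac R n s - tan_pi_frac R n t =
  tan_pi_frac R n s * tan_pi_frac R n t * tan_pi_frac R n (s + t).
Proof.
move=> n_odd; rewrite /tan_pi_frac intrD.
rewrite [(_ + _) / _]mulrDl [pi * (_ + _)]mulrDr.
by apply: tanD_subr; rewrite -?mulrDr -?mulrDl -?intrD cos_pi_frac_neq0.
Qed.

Lemma tan_pi_frac_cross_diff n (a0 a1 b0 b1 : int) : odd n -> a0 + b0 = 0 ->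
  tan_pi_frac R n (a1 + b1) - tan_pi_frac R n (a0 + b1)
  - tan_pi_frac R n (a1 + b0) + tan_pi_frac R n (a0 + b0)
  = tan_pi_frac R n (a1 + b0) * tan_pi_frac R n (a1 + b1)
    * tan_pi_frac R n (a0 + b1).
Proof.
move=> n_odd ab0; have -> : a1 + b1 = (a1 + b0) + (a0 + b1).
  by rewrite addrACA [b0 + _]addrC -addrACA ab0 addr0.
rewrite ab0 {4}/tan_pi_frac mul0r mulr0 tan0 addr0.
by rewrite addrAC tan_pi_fracD_subr //; ring.
Qed.

End TangentAtRationalMultiplesOfPi.

Theorem lemma4p2 (R : realType) (m n : nat) (a b : 'I_m.+1 -> int)
  (hm : (0 < m)%N) (hn : (0 < n)%N) (hodd : odd n)
  (hab : a ord0 + b ord0 = 0) (x : R) :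
  \det (\matrix_(j < m.+1, k < m.+1) (x + tan_pi_frac R n (a j + b k)))
  - \det (\matrix_(j < m.+1, k < m.+1) (tan_pi_frac R n (a j + b k)))
  = x * \det (\matrix_(j < m, k < m)
                (tan_pi_frac R n (a (lift ord0 j) + b (lift ord0 k))))
    * \prod_(k < m) (tan_pi_frac R n (a (lift ord0 k) + b ord0)
                     * tan_pi_frac R n (a ord0 + b (lift ord0 k))).
Proof.
(* [hm] and [hn] are not needed: the case [m = 0] holds as well, and
   [odd n] forces [n > 0]. *)
rewrite (det_add_const_subr (fun j k => tan_pi_frac R n (a j + b k))) /=.
set T := tan_pi_frac R n.
set G := \matrix_(j < m, k < m) T (a (lift 0 j) + b (lift 0 k)).
set u : 'rV[R]_m := \row_k T (a (lift 0 k) + b 0).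
set v : 'rV[R]_m := \row_k T (a 0 + b (lift 0 k)).
have -> : \matrix_(j < m, k < m) (T (a (lift 0 j) + b (lift 0 k))
     - T (a 0 + b (lift 0 k)) - T (a (lift 0 j) + b 0) + T (a 0 + b 0))
   = diag_mx u *m G *m diag_mx v.
  apply/matrixP => j k; rewrite mul_diag_mx mul_mx_diag !mxE.
  exact: tan_pi_frac_cross_diff.
rewrite !det_mulmx !det_diag big_split /=.
under eq_bigr do rewrite mxE.
under [\prod_(k < m) v 0 k]eq_bigr do rewrite mxE.
ring.
Qed.
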